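(* Let $N\in\mathbb N$, let $\{\Omega_k\}_k\subset\mathscr A$ be $N$-admissible sets and let $M\le N$ be a positive integer. Then: (i) if $\Omega_1\subset\Omega_2$, then $h_M(\Omega_1)\ge h_M(\Omega_2)$; (ii) if (P.6) holds and $\mathfrak m(\Omega_k)\to0$, then $h_M(\Omega_k)\to+\infty$; (iii) if (P.4), (P.5), (P.6) hold and $\Omega_k\to\Omega$ in $L^1(X,\mathfrak m)$ for some $\Omega\in\mathscr A$ with $\mathfrak m(\Omega)\in(0,+\infty)$, then $h_M(\Omega)\le\liminf_k h_M(\Omega_k)$ (with the convention $h_M(\Omega)=+\infty$ if $\Omega$ is not $M$-admissible). If moreover (P.3) holds, $P(\Omega)<+\infty$ and $P(\Omega_k)\to P(\Omega)$, then $h_M(\Omega)=\lim_k h_M(\Omega_k)$.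
   Context: $(X,\mathscr A,\mathfrak m)$ is a non-negative $\sigma$-finite measure space; for $A,B\in\mathscr A$, ''$A\subset B$'' means $\mathfrak m(A\setminus B)=0$. $P\colon\mathscr A\to[0,+\infty]$ is a proper functional (the perimeter). Convergence of sets in $L^1(X,\mathfrak m)$ means $L^1$ convergence of characteristic functions. Properties: (P.3) $P(E\cap F)+P(E\cup F)\le P(E)+P(F)$ for all $E,F\in\mathscr A$. (P.4) if $\chi_{E_k}\to\chi_E$ in $L^1(X,\mathfrak m)$ then $P(E)\le\liminf_k P(E_k)$. (P.5) for every $c\ge0$, $\{\chi_E: E\in\mathscr A,\ P(E)\le c\}$ is compact in $L^1(X,\mathfrak m)$. (P.6) there is $f\colon(0,+\infty)\to(0,+\infty)$ with $\lim_{\varepsilon\to0^+}f(\varepsilon)=+\infty$ such that $\mathfrak m(E)\le\varepsilon$ implies $P(E)\ge f(\varepsilon)\mathfrak m(E)$. An $N$-cluster is a family $\{\mathcal E(i)\}_{i=1}^N\subset\mathscr A$ with $0<\mathfrak m(\mathcal E(i))<+\infty$, $P(\mathcal E(i))<+\infty$, $\mathfrak m(\mathcal E(i)\cap\mathcal E(j))=0$ for $i\neq j$. $\Omega$ is $N$-admissible if it contains an $N$-cluster (then it is $M$-admissible for $M\le N$). $h_M(\Omega)=\inf\{\sum_{i=1}^M P(\mathcal E(i))/\mathfrak m(\mathcal E(i)):\mathcal E \text{ an } M\text{-cluster in }\Omega\}$. *)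

From HB Require Import structures.
From mathcomp Require Import all_boot all_order all_algebra.
From mathcomp Require Import all_classical all_reals all_analysis.
Set Implicit Arguments. Unset Strict Implicit. Unset Printing Implicit Defensive.
Import Order.TTheory GRing.Theory Num.Theory.
Local Open Scope classical_set_scope.
Local Open Scope ring_scope.

Section Cheeger.
Context {d : measure_display} {T : measurableType d} {R : realType}.
Variables (mu : {measure set T -> \bar R}) (P : set T -> \bar R).

Definition subset_ae (A B : set T) : Prop := mu (A `\` B) = 0%E.

Definition L1_conv (E : nat -> set T) (F : set T) : Prop :=
  (fun k => \int[mu]_x `| ((\1_(E k) x : R) - (\1_F x : R))%:E |)%E @ \oo --> 0%E.

Definition proper_functional : Prop :=
  (forall E, measurable E -> (0 <= P E)%E) /\
  (exists E, measurable E /\ (P E < +oo)%E).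

Definition P3 : Prop := forall E F, measurable E -> measurable F ->
  (P (E `&` F) + P (E `|` F) <= P E + P F)%E.

Definition P4 : Prop := forall (E : nat -> set T) (F : set T),
  (forall k, measurable (E k)) -> measurable F -> L1_conv E F ->
  (P F <= limn_einf (fun k => P (E k)))%E.

(* compactness in L^1 of {chi_E : P(E) <= c}, read as sequential compactness *)
Definition P5 : Prop := forall (c : R), 0 <= c ->
  forall E : nat -> set T, (forall k, measurable (E k)) ->
    (forall k, (P (E k) <= c%:E)%E) ->
  exists (phi : nat -> nat) (F : set T),
    {homo phi : n m / (n < m)%N} /\ measurable F /\ (P F <= c%:E)%E /\
    L1_conv (fun k => E (phi k)) F.

Definition P6 : Prop := exists f : R -> R,
  (forall e, 0 < e -> 0 < f e) /\
  (f x @[x --> 0^'+] --> +oo) /\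
  (forall (E : set T) (e : R), measurable E -> 0 < e -> (mu E <= e%:E)%E ->
     ((f e)%:E * mu E <= P E)%E).

Definition is_cluster (N : nat) (E : 'I_N -> set T) : Prop :=
  (forall i, measurable (E i) /\ (0 < mu (E i))%E /\ (mu (E i) < +oo)%E /\
             (P (E i) < +oo)%E) /\
  (forall i j, i != j -> mu (E i `&` E j) = 0%E).

Definition cluster_in (N : nat) (E : 'I_N -> set T) (Om : set T) : Prop :=
  is_cluster E /\ (forall i, subset_ae (E i) Om).

Definition admissible (N : nat) (Om : set T) : Prop :=
  exists E : 'I_N -> set T, cluster_in E Om.

(* h_M(Om); equals +oo (inf of the empty set) when Om is not M-admissible *)
Definition cheeger (M : nat) (Om : set T) : \bar R :=
  ereal_inf [set (\sum_(i < M) fine (P (E i)) / fine (mu (E i)))%:E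
            | E in [set E : 'I_M -> set T | cluster_in E Om]].

End Cheeger.

From HB Require Import structures.
From mathcomp Require Import all_boot all_order all_algebra.
From mathcomp Require Import all_classical all_reals all_analysis.
From mathcomp Require Import lra.
Import Order.TTheory GRing.Theory Num.Theory.
Local Open Scope classical_set_scope.
Local Open Scope ring_scope.

Set Implicit Arguments. Unset Strict Implicit. Unset Printing Implicit Defensive.

(* (i) holds because a cluster in Om_k is a cluster in every set containing
   Om_k up to a null set, and (ii) because, by (P.6), a cluster component of
   small measure has a large ratio P/m.
   For the lower bound, pick clusters almost realising h_M(Om_k) along a
   subsequence realising the liminf.  Their ratios stay below some L, so (P.6)
   bounds the measures of their components from below, while m(Om_k) bounds
   them from above; hence their perimeters are bounded and (P.5) gives a common
   L^1-convergent subsequence.  The limit is a cluster in Omega, and each ratio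
   P/m is lower semicontinuous by (P.4) and the L^1-continuity of m.
   For the upper bound, intersect a cluster E in Omega with Om_k.  Then
   m(E_i & Om_k) -> m(E_i), and (P.3) gives
   P(E_i & Om_k) <= P(E_i) + P(Om_k) - P(E_i | Om_k), where the last two terms
   nearly cancel: P(Om_k) -> P(Omega), while by (P.4) P(E_i | Om_k) is
   eventually almost at least P(E_i | Omega) >= P(Omega). *)

Section ereal_sequences.
Context {R : realType}.
Implicit Types (u : nat -> \bar R) (x y : \bar R).
Local Open Scope ereal_scope.

Lemma cvge_lt u x y : u @ \oo --> x -> x < y -> \forall k \near \oo, u k < y.
Proof. by move=> ux /open_ereal_lt'; apply: ux. Qed.

Lemma lee_cvg0 u x y : u @ \oo --> 0 ->
  (\forall k \near \oo, x <= y + u k) -> x <= y.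
Proof.
move=> u0 xyu; rewrite -[y]adde0; apply: cvge_to_ge xyu.
by apply: cvgeD; [exact: fin_num_adde_defl|exact: cvg_cst|].
Qed.

Lemma lee_gtP x y : (forall r : R, y < r%:E -> x <= r%:E) -> x <= y.
Proof.
case: y => [r| |] xy; last 2 first.
- exact: leey.
- have := xy (fine x - 1)%R (ltNyr _).
  by case: x {xy} => [s| |] //=; rewrite lee_fin => ?; exfalso; lra.
apply/lee_addgt0Pr => e e0; apply: xy; rewrite lte_fin; lra.
Qed.

Lemma limn_einfE u : limn_einf u = ereal_sup (range (einfs u)).
Proof. by rewrite limn_einf_lim; apply: cvg_lim => //; exact: cvg_einfs_sup. Qed.

Lemma lt_limn_einf u x : x < limn_einf u -> \forall k \near \oo, x < u k.
Proof.
rewrite limn_einfE => /ereal_sup_gt[_ [n _ <-] xun]; exists n => // k nk.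
by apply: lt_le_trans xun _; apply: ereal_inf_lbound; exists k.
Qed.

Lemma limn_einf_lt u x : limn_einf u < x -> forall n, exists2 k, (n <= k)%N & u k < x.
Proof.
rewrite limn_einfE => ux n.
have : einfs u n < x by apply: le_lt_trans ux; apply: ereal_sup_ubound; exists n.
by move=> /ereal_inf_lt[_ [k /= nk <-] ukx]; exists k.
Qed.

Lemma limn_esup_le u x : (\forall k \near \oo, u k <= x) -> limn_esup u <= x.
Proof.
move=> ux; rewrite /limn_esup limf_esupE.
apply: le_trans (ereal_inf_lbound _) _; first by exists [set k | u k <= x].
by apply: ge_ereal_sup => _ [k ukx <-].
Qed.

Lemma cvg_limn_einf_esup u x : limn_esup u <= x -> x <= limn_einf u ->
  u @ \oo --> x.
Proof.
move=> supx xinf.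
have infE : limn_einf u = x.
  by apply/eqP; rewrite eq_le xinf (le_trans (limn_einf_sup u)).
have supE : limn_esup u = x.
  by apply/eqP; rewrite eq_le supx (le_trans xinf (limn_einf_sup u)).
apply: (@squeeze_cvge _ _ _ _ (einfs u) _ (esups u)).
- apply: nearW => n /=; apply/andP; split.
    by apply: ereal_inf_lbound; exists n => /=.
  by apply: ereal_sup_ubound; exists n => /=.
- by rewrite -infE limn_einf_lim; exact: is_cvg_einfs.
- by rewrite -supE limn_esup_lim; exact: is_cvg_esups.
Qed.
End ereal_sequences.

Lemma cvgy_at_right0_ge {R : realType} (f : R -> R) (A : R) :
  f x @[x --> 0^'+] --> +oo -> exists2 e : R, 0 < e & A <= f e.
Proof.
move/cvgryPge => /(_ A)[e /= e0 fA]; exists (e / 2); first by rewrite divr_gt0.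
apply: fA; last by rewrite divr_gt0.
by rewrite /= distrC subr0 gtr0_norm ?divr_gt0 //; lra.
Qed.

Lemma frequently_subseq (Q : nat -> Prop) :
  (forall n, exists2 k, (n <= k)%N & Q k) ->
  exists2 psi : nat -> nat, {homo psi : n m / (n < m)%N} & forall j, Q (psi j).
Proof.
move=> freqQ; have /boolp.choice[g gQ] : forall n, exists k, (n <= k)%N /\ Q k.
  by move=> n; have [k nk Qk] := freqQ n; exists k.
pose psi := fix psi j := if j is j'.+1 then g (psi j').+1 else g 0%N.
exists psi; last by case=> [|j]; exact: (gQ _).2.
by apply: (homo_ltn ltn_trans) => n; exact: (gQ _).1.
Qed.

Lemma homo_ltn_cvgny (phi : nat -> nat) : {homo phi : n m / (n < m)%N} ->
  phi @ \oo --> \oo.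
Proof.
move=> phi_incr; apply/cvgnyPge => A; exists A => // n /= An.
apply: leq_trans An _; elim: n => // n IHn.
exact: leq_ltn_trans IHn (phi_incr _ _ (ltnSn n)).
Qed.

Section symmetric_difference.
Context {d : measure_display} {T : measurableType d} {R : realType}.
Variable mu : {measure set T -> \bar R}.
Implicit Types A B C D : set T.
Local Open Scope ereal_scope.

Lemma measurableY A B : measurable A -> measurable B -> measurable (A `+` B).
Proof. by move=> mA mB; apply: measurableU; exact: measurableD. Qed.

Lemma le_measure_setU A B C : measurable A -> measurable B -> measurable C ->
  A `<=` B `|` C -> mu A <= mu B + mu C.
Proof.
move=> mA mB mC ABC; apply: le_trans (measureU2 mu mB mC).
by apply: le_measure; rewrite ?inE //; exact: measurableU.
Qed.

Lemma measure_le_setY A B : measurable A -> measurable B ->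
  mu A <= mu B + mu (A `+` B).
Proof.
move=> mA mB; apply: le_measure_setU => //; first exact: measurableY.
by move=> x Ax; have [Bx|nBx] := pselect (B x); [left|right; left].
Qed.

Lemma measure_setD_triangle A B C D : measurable A -> measurable B ->
  measurable C -> measurable D ->
  mu (A `\` D) <= mu (A `+` B) + mu (B `\` C) + mu (C `+` D).
Proof.
move=> mA mB mC mD.
have mABC : measurable ((A `+` B) `|` (B `\` C)).
  by apply: measurableU; [exact: measurableY|exact: measurableD].
apply: le_trans (leeD2r _ (measureU2 mu (measurableY mA mB) (measurableD mB mC))).
apply: le_measure_setU => //; [exact: measurableD|exact: measurableY|].
move=> x [Ax nDx]; have [Bx|nBx] := pselect (B x); last by left; left; left.
by have [Cx|nCx] := pselect (C x); [right; left|left; right].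
Qed.

Lemma measure_setI_triangle A B C D : measurable A -> measurable B ->
  measurable C -> measurable D ->
  mu (A `&` C) <= mu (A `+` B) + mu (B `&` D) + mu (C `+` D).
Proof.
move=> mA mB mC mD.
have mABD : measurable ((A `+` B) `|` (B `&` D)).
  by apply: measurableU; [exact: measurableY|exact: measurableI].
apply: le_trans (leeD2r _ (measureU2 mu (measurableY mA mB) (measurableI _ _ mB mD))).
apply: le_measure_setU => //; [exact: measurableI|exact: measurableY|].
move=> x [Ax Cx]; have [Bx|nBx] := pselect (B x); last by left; left; left.
by have [Dx|nDx] := pselect (D x); [left; right|right; left].
Qed.

Lemma integral_indic_setY A B : measurable A -> measurable B ->
  \int[mu]_x `|((\1_A x : R) - (\1_B x : R))%:E| = mu (A `+` B).
Proof.
move=> mA mB; rewrite -(setIT (A `+` B)) -integral_indic; last 2 first.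
- exact: measurableT.
- exact: measurableY.
apply: eq_integral => x _; rewrite abse_EFin /indic /=; congr (_%:E).
have [Ax|nAx] := pselect (A x); have [Bx|nBx] := pselect (B x).
- by rewrite (mem_set Ax) (mem_set Bx) memNset ?subrr ?normr0 // => -[[]|[]].
- by rewrite (mem_set Ax) (memNset nBx) mem_set ?subr0 ?normr1 //; left.
- by rewrite (memNset nAx) (mem_set Bx) mem_set ?sub0r ?normrN ?normr1 //; right.
- by rewrite (memNset nAx) (memNset nBx) memNset ?subrr ?normr0 // => -[[]|[]].
Qed.

End symmetric_difference.

Section L1_convergence.
Context {d : measure_display} {T : measurableType d} {R : realType}.
Variable mu : {measure set T -> \bar R}.
Implicit Types (A F H : set T) (E G : nat -> set T).
Local Open Scope ereal_scope.

Lemma le_measure_subset_ae A F : measurable A -> measurable F ->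
  subset_ae mu A F -> mu A <= mu F.
Proof.
move=> mA mF AF; rewrite -[mu F]add0e -AF.
apply: le_measure_setU => //; first exact: measurableD.
by move=> x Ax; have [|] := pselect (F x); [right|left].
Qed.

Lemma L1_convE E F : (forall k, measurable (E k)) -> measurable F ->
  L1_conv mu E F <-> (fun k => mu (E k `+` F)) @ \oo --> 0.
Proof.
move=> mE mF; rewrite /L1_conv.
by have -> : (fun k => \int[mu]_x `|((\1_(E k) x : R) - (\1_F x : R))%:E|) =
  (fun k => mu (E k `+` F)) by apply/funext => k; exact: integral_indic_setY.
Qed.

Lemma L1_conv_subseq E F (phi : nat -> nat) : {homo phi : n m / (n < m)%N} ->
  L1_conv mu E F -> L1_conv mu (fun k => E (phi k)) F.
Proof. by move=> /homo_ltn_cvgny phioo EF; exact: cvg_comp phioo EF. Qed.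

Lemma L1_conv_cst A F : measurable A -> measurable F -> mu (A `+` F) = 0 ->
  L1_conv mu (fun _ => A) F.
Proof. by move=> mA mF AF0; apply/L1_convE => //; rewrite AF0; exact: cvg_cst. Qed.

Lemma L1_conv_setUl A E F : measurable A -> (forall k, measurable (E k)) ->
  measurable F -> L1_conv mu E F -> L1_conv mu (fun k => A `|` E k) (A `|` F).
Proof.
move=> mA mE mF /L1_convE-/(_ mE mF) EF.
apply/L1_convE; [by move=> k; exact: measurableU|exact: measurableU|].
apply: (@squeeze_cvge _ _ _ _ (cst 0) _ (fun k => mu (E k `+` F))) => //; last exact: cvg_cst.
apply: nearW => k; rewrite measure_ge0 /=; apply: le_measure; rewrite ?inE.
- by apply: measurableY; exact: measurableU.
- exact: measurableY.
by move=> x [[[Ax|Ex] nAFx]|[[Ax|Fx] nAEx]];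
  [exfalso; apply: nAFx; left|left; split=> // Fx; apply: nAFx; right
  |exfalso; apply: nAEx; left|right; split=> // Ex; apply: nAEx; right].
Qed.

Lemma L1_conv_measure_le E F (c : \bar R) : (forall k, measurable (E k)) ->
  measurable F -> (forall k, mu (E k) <= c) -> L1_conv mu E F -> mu F <= c.
Proof.
move=> mE mF Ec /(L1_convE mE mF) EF; apply: lee_cvg0 EF _; apply: nearW => k.
by apply: le_trans (measure_le_setY mu mF (mE k)) _; rewrite setYC leeD2r.
Qed.

Lemma L1_conv_measure_ge E F (c : \bar R) : (forall k, measurable (E k)) ->
  measurable F -> (forall k, c <= mu (E k)) -> L1_conv mu E F -> c <= mu F.
Proof.
move=> mE mF cE /(L1_convE mE mF) EF; apply: lee_cvg0 EF _; apply: nearW => k.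
exact: le_trans (cE k) (measure_le_setY mu (mE k) mF).
Qed.

Lemma subset_ae_L1_conv E G F H : (forall k, measurable (E k)) ->
  (forall k, measurable (G k)) -> measurable F -> measurable H ->
  (forall k, subset_ae mu (E k) (G k)) -> L1_conv mu E F -> L1_conv mu G H ->
  subset_ae mu F H.
Proof.
move=> mE mG mF mH EG /(L1_convE mE mF) EF /(L1_convE mG mH) GH.
apply/eqP; rewrite eq_le measure_ge0 andbT.
apply: (@lee_cvg0 _ (fun k => mu (E k `+` F) + mu (G k `+` H))).
  by rewrite -[0]adde0; apply: cvgeD.
apply: nearW => k; rewrite add0e.
by have := measure_setD_triangle mu mF (mE k) (mG k) mH; rewrite setYC (EG k) adde0.
Qed.

Lemma setI_null_L1_conv E G F H : (forall k, measurable (E k)) ->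
  (forall k, measurable (G k)) -> measurable F -> measurable H ->
  (forall k, mu (E k `&` G k) = 0) -> L1_conv mu E F -> L1_conv mu G H ->
  mu (F `&` H) = 0.
Proof.
move=> mE mG mF mH EG /(L1_convE mE mF) EF /(L1_convE mG mH) GH.
apply/eqP; rewrite eq_le measure_ge0 andbT.
apply: (@lee_cvg0 _ (fun k => mu (E k `+` F) + mu (G k `+` H))).
  by rewrite -[0]adde0; apply: cvgeD.
apply: nearW => k; rewrite add0e.
have := measure_setI_triangle mu mF (mE k) mH (mG k).
by rewrite setYC [H `+` _]setYC (EG k) adde0.
Qed.

End L1_convergence.

Section ratio_approximation.
Context {R : realType}.
Implicit Types p m eta : R.

Lemma divr_lower_approx p m eta : 0 <= p -> 0 < m -> 0 < eta ->
  exists2 dl, 0 < dl & forall p' m', 0 <= p' -> p - dl <= p' -> 0 < m' ->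
    m' <= m + dl -> p / m <= p' / m' + eta.
Proof.
move=> p0 m0 e0; set q := p / m.
have q0 : 0 <= q by rewrite divr_ge0 // ltW.
have pE : p = q * m by rewrite divfK // gt_eqF.
exists (eta * m / (1 + q)); first by rewrite divr_gt0 ?mulr_gt0 //; lra.
have dlE : eta * m / (1 + q) * (1 + q) = eta * m by rewrite divfK // gt_eqF //; lra.
move: (eta * m / (1 + q)) dlE => dl dlE p' m' p'0 pp' m'0 mm'.
rewrite -lerBlDr ler_pdivlMr //.
have [qe|qe] := lerP q eta; nra.
Qed.

Lemma divr_upper_approx p m eta : 0 <= p -> 0 < m -> 0 < eta ->
  exists dl, [/\ 0 < dl, dl < m & forall p' m', p' <= p + dl -> m - dl <= m' ->
    p' / m' <= p / m + eta].
Proof.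
move=> p0 m0 e0; set q := p / m.
have q0 : 0 <= q by rewrite divr_ge0 // ltW.
have pE : p = q * m by rewrite divfK // gt_eqF.
exists (eta * m / (1 + q + eta)).
have dlE : eta * m / (1 + q + eta) * (1 + q + eta) = eta * m.
  by rewrite divfK // gt_eqF //; lra.
have dl0 : 0 < eta * m / (1 + q + eta) by rewrite divr_gt0 ?mulr_gt0 //; lra.
move: (eta * m / (1 + q + eta)) dlE dl0 => dl dlE dl0.
have dlm : dl < m by nra.
split => // p' m' pp' mm'.
have m'0 : 0 < m' by lra.
rewrite ler_pdivrMr //; nra.
Qed.

End ratio_approximation.

Section cheeger_constant.
Context {d : measure_display} {T : measurableType d} {R : realType}.
Variables (mu : {measure set T -> \bar R}) (P : set T -> \bar R).
Hypothesis P_ge0 : forall E, measurable E -> (0 <= P E)%E.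
Local Open Scope ereal_scope.

Definition perimeter_ratio (A : set T) : R := (fine (P A) / fine (mu A))%R.

Definition cluster_cost M (E : 'I_M -> set T) : R :=
  (\sum_(i < M) perimeter_ratio (E i))%R.

Lemma cluster_fine N (E : 'I_N -> set T) i : is_cluster mu P E ->
  [/\ measurable (E i), (fine (mu (E i)))%:E = mu (E i), (0 < fine (mu (E i)))%R,
      (fine (P (E i)))%:E = P (E i) & (0 <= fine (P (E i)))%R].
Proof.
move=> [E_ok _]; have [mE [mu_gt0 [mu_fin P_fin]]] := E_ok i.
have mu_fn : mu (E i) \is a fin_num by rewrite ge0_fin_numE // measure_ge0.
have P_fn : P (E i) \is a fin_num by rewrite ge0_fin_numE // P_ge0.
split => //; [exact: fineK|by rewrite -lte_fin fineK|exact: fineK|].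
by rewrite -lee_fin fineK // P_ge0.
Qed.

Lemma ratio_ge0 N (E : 'I_N -> set T) i : is_cluster mu P E ->
  (0 <= perimeter_ratio (E i))%R.
Proof. by move=> /(cluster_fine i)[_ _ mu_gt0 _ P_ge0']; rewrite divr_ge0 // ltW. Qed.

Lemma cluster_cost_ge0 N (E : 'I_N -> set T) : is_cluster mu P E ->
  (0 <= cluster_cost E)%R.
Proof. by move=> cE; apply: sumr_ge0 => i _; exact: ratio_ge0. Qed.

Lemma ratio_le_cluster_cost N (E : 'I_N -> set T) i : is_cluster mu P E ->
  (perimeter_ratio (E i) <= cluster_cost E)%R.
Proof.
move=> cE; rewrite /cluster_cost (bigD1 i) //= lerDl.
by apply: sumr_ge0 => j _; exact: ratio_ge0.
Qed.

Lemma cluster_cost_le_add N (E G : 'I_N -> set T) (eta : R) : (0 <= eta)%R ->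
  (forall i, perimeter_ratio (G i) <=
             perimeter_ratio (E i) + eta / N%:R)%R ->
  (cluster_cost G <= cluster_cost E + eta)%R.
Proof.
move=> eta0 GE; apply: le_trans (ler_sum _ (fun i _ => GE i)) _.
rewrite big_split /= sumr_const card_ord lerD2l.
have [->|N0] := posnP N; first by rewrite mulr0n.
by rewrite -(mulr_natr (eta / N%:R)) divfK // pnatr_eq0 -lt0n.
Qed.

Lemma cheeger_le_cost M (E : 'I_M -> set T) Om : cluster_in mu P E Om ->
  cheeger mu P M Om <= (cluster_cost E)%:E.
Proof. by move=> EOm; apply: ereal_inf_lbound; exists E. Qed.

Lemma cheeger_ltP M Om x : cheeger mu P M Om < x ->
  exists2 E : 'I_M -> set T, cluster_in mu P E Om & (cluster_cost E)%:E < x.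
Proof. by move=> /ereal_inf_lt[_ [E EOm <-] Ex]; exists E. Qed.

Lemma subset_ae_trans A B C : measurable A -> measurable B -> measurable C ->
  subset_ae mu A B -> subset_ae mu B C -> subset_ae mu A C.
Proof.
move=> mA mB mC AB BC; apply/eqP; rewrite eq_le measure_ge0 andbT /subset_ae.
rewrite -AB -[X in _ <= X]adde0 -BC.
apply: le_measure_setU; [exact: measurableD..|].
move=> x [Ax nCx]; have [Bx|nBx] := pselect (B x); [right|left] => //.
Qed.

Lemma cheeger_subset_ae M A B : measurable A -> measurable B -> subset_ae mu A B ->
  cheeger mu P M B <= cheeger mu P M A.
Proof.
move=> mA mB AB; apply: ereal_inf_le_tmp => _ [E [cE EA] <-]; exists E => //.
split=> // i; have [mE _ _ _ _] := cluster_fine i cE.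
exact: subset_ae_trans mE mA mB (EA i) AB.
Qed.

Lemma le_ratio_small N (E : 'I_N -> set T) i (c e : R) : is_cluster mu P E ->
  (forall A, measurable A -> mu A <= e%:E -> c%:E * mu A <= P A) ->
  mu (E i) <= e%:E -> (c <= perimeter_ratio (E i))%R.
Proof.
move=> cE small Ee; have [mE muE mu_gt0 PE _] := cluster_fine i cE.
by rewrite ler_pdivlMr // -lee_fin EFinM muE PE small.
Qed.

Lemma cheeger_ge_small M Om (c e : R) : (0 < M)%N -> measurable Om ->
  (forall A, measurable A -> mu A <= e%:E -> c%:E * mu A <= P A) ->
  mu Om <= e%:E -> c%:E <= cheeger mu P M Om.
Proof.
move=> M0 mOm small Ome; apply/ereal_infP => _ [E [cE EOm] <-].
pose i0 := Ordinal M0; have [mE _ _ _ _] := cluster_fine i0 cE.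
rewrite lee_fin; apply: le_trans (ratio_le_cluster_cost i0 cE).
apply: le_ratio_small cE small _; apply: le_trans Ome.
exact: le_measure_subset_ae.
Qed.

Lemma cheeger_cvgy M (Om : nat -> set T) : (0 < M)%N ->
  (forall k, measurable (Om k)) -> P6 mu P ->
  (fun k => mu (Om k)) @ \oo --> 0 -> (fun k => cheeger mu P M (Om k)) @ \oo --> +oo.
Proof.
move=> M0 mOm [f [_ [fy small]]] Om0; apply/cvgeyPge => A.
have [e e0 Afe] := cvgy_at_right0_ge A fy.
apply: filterS (cvge_lt Om0 (_ : 0 < e%:E)) => [k Omk|]; last by rewrite lte_fin.
apply: le_trans (@cheeger_ge_small _ _ (f e) _ M0 (mOm k) _ (ltW Omk)).
  by rewrite lee_fin.
by move=> B mB; exact: small mB e0.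
Qed.

End cheeger_constant.

Section lower_semicontinuity.
Context {d : measure_display} {T : measurableType d} {R : realType}.
Variables (mu : {measure set T -> \bar R}) (P : set T -> \bar R).
Hypothesis P_ge0 : forall E, measurable E -> (0 <= P E)%E.
Local Open Scope ereal_scope.

Lemma P5_extract M (E : 'I_M -> nat -> set T) (c : R) : P5 mu P -> (0 <= c)%R ->
  (forall i k, measurable (E i k)) -> (forall i k, P (E i k) <= c%:E) ->
  exists (phi : nat -> nat) (F : 'I_M -> set T), {homo phi : n m / (n < m)%N} /\
    (forall i, measurable (F i) /\ P (F i) <= c%:E /\
       L1_conv mu (fun k => E i (phi k)) (F i)).
Proof.
move=> P5c c0; elim: M E => [|M IH] E mE PE.
  by exists id, (fun _ => set0); split => // -[].
have [phi [F' [phi_incr F'P]]] :=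
  IH (fun i => E (lift ord0 i)) (fun i => mE _) (fun i => PE _).
have [psi [F0 [psi_incr [mF0 [PF0 F0L]]]]] :=
  P5c c c0 (fun k => E ord0 (phi k)) (fun k => mE _ _) (fun k => PE _ _).
exists (fun k => phi (psi k)),
  (fun i => if unlift ord0 i is Some j then F' j else F0).
split; first by move=> n m nm; apply: phi_incr; apply: psi_incr.
move=> i; case: (unliftP ord0 i) => [j ->|->] //.
have [mF [PF FL]] := F'P j; do 2!split => //.
exact: (L1_conv_subseq psi_incr FL).
Qed.

Lemma cluster_in_L1_conv M (E : nat -> 'I_M -> set T) (Om : nat -> set T) Omega
    (F : 'I_M -> set T) (a b : \bar R) :
  (forall k, measurable (Om k)) -> measurable Omega -> (forall i, measurable (F i)) ->
  (forall k, cluster_in mu P (E k) (Om k)) -> L1_conv mu Om Omega ->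
  (forall i, L1_conv mu (fun k => E k i) (F i)) ->
  0 < a -> b < +oo -> (forall k i, a <= mu (E k i)) -> (forall k i, mu (E k i) <= b) ->
  (forall i, P (F i) < +oo) -> cluster_in mu P F Omega.
Proof.
move=> mOm mO mF cE OmL EFL a0 boo aE Eb PF.
have mE k i : measurable (E k i) by have [] := cluster_fine P_ge0 i (cE k).1.
split; first split.
- move=> i; split => //; split.
    exact: lt_le_trans a0 (L1_conv_measure_ge (mE ^~ i) (mF i) (aE ^~ i) (EFL i)).
  split => //; exact: le_lt_trans (L1_conv_measure_le (mE ^~ i) (mF i) (Eb ^~ i) (EFL i)) boo.
- move=> i j ij; apply: setI_null_L1_conv (mE ^~ i) (mE ^~ j) (mF i) (mF j) _ (EFL i) (EFL j).
  by move=> k; exact: (cE k).1.2.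
- move=> i; apply: subset_ae_L1_conv (mE ^~ i) mOm (mF i) mO _ (EFL i) OmL.
  by move=> k; exact: (cE k).2.
Qed.

Local Notation ratio := (perimeter_ratio mu P).

Lemma ratio_L1_lsc N (E : nat -> 'I_N -> set T) (F : 'I_N -> set T) i (eta : R) :
  P4 mu P -> (forall k, is_cluster mu P (E k)) -> is_cluster mu P F ->
  L1_conv mu (fun k => E k i) (F i) -> (0 < eta)%R ->
  \forall k \near \oo, (ratio (F i) <= ratio (E k i) + eta)%R.
Proof.
move=> P4P cE cF EFL eta0; have [mF muF mu_gt0 PF P_ge0'] := cluster_fine P_ge0 i cF.
have mE k : measurable (E k i) by have [] := cluster_fine P_ge0 i (cE k).
have [dl dl0 approx] := divr_lower_approx P_ge0' mu_gt0 eta0.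
have P_near : \forall k \near \oo, (fine (P (F i)) - dl)%:E < P (E k i).
  apply: lt_limn_einf; apply: lt_le_trans (P4P _ _ mE mF EFL).
  by rewrite -PF lte_fin; lra.
have mu_near : \forall k \near \oo, mu (E k i) <= (fine (mu (F i)) + dl)%:E.
  have dlE : 0 < dl%:E by rewrite lte_fin.
  apply: filterS (cvge_lt ((L1_convE mu mE mF).1 EFL) dlE) => k /ltW EFdl.
  apply: le_trans (measure_le_setY mu (mE k) mF) _.
  by rewrite EFinD muF leeD2l.
apply: filterS2 P_near mu_near => k Pk muk.
have [_ muE mu_gt0' PE PE_ge0] := cluster_fine P_ge0 i (cE k).
apply: approx => //; first by rewrite -lee_fin PE ltW.
by rewrite -lee_fin muE.
Qed.

Lemma cluster_cost_L1_lsc N (E : nat -> 'I_N -> set T) (F : 'I_N -> set T) (eta : R) :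
  P4 mu P -> (forall k, is_cluster mu P (E k)) -> is_cluster mu P F ->
  (forall i, L1_conv mu (fun k => E k i) (F i)) -> (0 < eta)%R ->
  \forall k \near \oo, (cluster_cost mu P F <= cluster_cost mu P (E k) + eta)%R.
Proof.
move=> P4P cE cF EFL eta0.
have ratio_near i : \forall k \near \oo, (ratio (F i) <= ratio (E k i) + eta / N%:R)%R.
  apply: ratio_L1_lsc => //; rewrite divr_gt0 // ltr0n.
  exact: leq_ltn_trans (leq0n i) (ltn_ord i).
apply: filterS (filter_forall _ ratio_near) => k ratio_k.
exact: cluster_cost_le_add (ltW eta0) ratio_k.
Qed.

Lemma cheeger_le_of_bounded_clusters M (Om : nat -> set T) Omega
    (E : nat -> 'I_M -> set T) (e C c L : R) :
  P4 mu P -> P5 mu P ->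
  (forall k, measurable (Om k)) -> measurable Omega -> L1_conv mu Om Omega ->
  (forall k, cluster_in mu P (E k) (Om k)) -> (forall k, (cluster_cost mu P (E k) < L)%R) ->
  (0 < e)%R -> (forall k i, e%:E < mu (E k i)) -> (forall k i, mu (E k i) <= C%:E) ->
  (0 <= c)%R -> (forall k i, P (E k i) <= c%:E) ->
  cheeger mu P M Omega <= L%:E.
Proof.
move=> P4P P5P mOm mO OmL cE costE e0 muE_gt muE_le c0 PE_le.
have mE k i : measurable (E k i) by have [] := cluster_fine P_ge0 i (cE k).1.
have [phi [F [phi_incr FP]]] := P5_extract P5P c0 (fun i k => mE k i) (fun i k => PE_le k i).
have mF i : measurable (F i) by have [] := FP i.
have EFL i : L1_conv mu (fun k => E (phi k) i) (F i) by have [_ []] := FP i.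
have cF : cluster_in mu P F Omega.
  apply: (cluster_in_L1_conv (E := fun k => E (phi k)) (Om := fun k => Om (phi k))
    (a := e%:E) (b := C%:E)) => [k|||k|||||k i|k i|i] //.
  - exact: L1_conv_subseq.
  - exact: ltry.
  - exact: ltW.
  - by have [_ [PF _]] := FP i; exact: le_lt_trans PF (ltry _).
apply: le_trans (cheeger_le_cost cF) _; rewrite lee_fin.
apply/ler_addgt0Pr => eta eta0.
have [k costk] := filter_ex (cluster_cost_L1_lsc P4P (fun k => (cE (phi k)).1) cF.1 EFL eta0).
by apply: le_trans costk _; rewrite lerD2r ltW.
Qed.

Lemma cheeger_le_of_L1_conv M (Om : nat -> set T) Omega (C L : R) :
  P4 mu P -> P5 mu P -> P6 mu P ->
  (forall k, measurable (Om k)) -> measurable Omega -> L1_conv mu Om Omega ->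
  (forall k, mu (Om k) <= C%:E) -> (forall k, cheeger mu P M (Om k) < L%:E) ->
  cheeger mu P M Omega <= L%:E.
Proof.
move=> P4P P5P [f [_ [fy small]]] mOm mO OmL OmC OmL'.
have /boolp.choice[E /all_and2[cE costE]] : forall k, exists E : 'I_M -> set T,
    cluster_in mu P E (Om k) /\ (cluster_cost mu P E < L)%R.
  by move=> k; have [E ? ?] := cheeger_ltP (OmL' k); exists E; rewrite -lte_fin.
have L0 : (0 <= L)%R := le_trans (cluster_cost_ge0 P_ge0 (cE 0%N).1) (ltW (costE 0%N)).
have C0 : (0 <= C)%R by rewrite -lee_fin (le_trans (measure_ge0 mu (Om 0%N)) (OmC 0%N)).
have ratio_lt k i : (ratio (E k i) < L)%R.
  exact: le_lt_trans (ratio_le_cluster_cost P_ge0 i (cE k).1) (costE k).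
(* (P.6) keeps the components away from measure zero, since their ratios stay below L. *)
have [e e0 Lfe] := cvgy_at_right0_ge L fy.
have muE_gt k i : e%:E < mu (E k i).
  rewrite ltNge; apply/negP => Eke.
  have := le_ratio_small P_ge0 (cE k).1 (fun A mA => small A e mA e0) Eke.
  by move=> /(le_trans Lfe)/le_lt_trans/(_ (ratio_lt k i)); rewrite ltxx.
have muE_le k i : mu (E k i) <= C%:E.
  have [mE _ _ _ _] := cluster_fine P_ge0 i (cE k).1.
  exact: le_trans (le_measure_subset_ae mE (mOm k) ((cE k).2 i)) (OmC k).
have PE_le k i : P (E k i) <= (L * C)%:E.
  have [_ muE mu_gt0 PE PE_ge0] := cluster_fine P_ge0 i (cE k).1.
  rewrite -PE lee_fin -(divfK (lt0r_neq0 mu_gt0) (fine (P _))).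
  apply: ler_pM; [by rewrite divr_ge0 // ltW|exact: ltW|exact: ltW (ratio_lt k i)|].
  by rewrite -lee_fin muE.
exact: cheeger_le_of_bounded_clusters P4P P5P mOm mO OmL cE costE e0 muE_gt muE_le
  (mulr_ge0 L0 C0) PE_le.
Qed.

Lemma cheeger_lsc M (Om : nat -> set T) Omega :
  P4 mu P -> P5 mu P -> P6 mu P ->
  (forall k, measurable (Om k)) -> measurable Omega -> mu Omega < +oo ->
  L1_conv mu Om Omega ->
  cheeger mu P M Omega <= limn_einf (fun k => cheeger mu P M (Om k)).
Proof.
move=> P4P P5P P6P mOm mO Ooo OmL; apply: lee_gtP => L lim_lt.
pose C := (fine (mu Omega) + 1)%R.
have OmC : \forall k \near \oo, mu (Om k) <= C%:E.
  have OmL1 := cvge_lt ((L1_convE mu mOm mO).1 OmL) (lte01 : 0 < 1%:E).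
  apply: filterS OmL1 => k /ltW Om1; apply: le_trans (measure_le_setY mu (mOm k) mO) _.
  by rewrite EFinD fineK ?ge0_fin_numE ?measure_ge0 // leeD2l.
have [psi psi_incr psiL] : exists2 psi : nat -> nat, {homo psi : n m / (n < m)%N} &
    forall j, cheeger mu P M (Om (psi j)) < L%:E /\ mu (Om (psi j)) <= C%:E.
  apply: (@frequently_subseq (fun k => cheeger mu P M (Om k) < L%:E /\ mu (Om k) <= C%:E)).
  move=> n; have [N _ NC] := OmC.
  have [k nk kL] := limn_einf_lt lim_lt (maxn n N).
  exists k; first exact: leq_trans (leq_maxl _ _) nk.
  by split=> //; apply: NC; exact: leq_trans (leq_maxr _ _) nk.
apply: (cheeger_le_of_L1_conv (Om := fun j => Om (psi j)) (C := C)) => // [|j|j].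
- exact: L1_conv_subseq.
- exact: (psiL j).2.
- exact: (psiL j).1.
Qed.

End lower_semicontinuity.

Section upper_semicontinuity.
Context {d : measure_display} {T : measurableType d} {R : realType}.
Variables (mu : {measure set T -> \bar R}) (P : set T -> \bar R).
Hypothesis P_ge0 : forall E, measurable E -> (0 <= P E)%E.
Local Open Scope ereal_scope.

Lemma P4_le_null_setY A B : P4 mu P -> measurable A -> measurable B ->
  mu (A `+` B) = 0 -> P B <= P A.
Proof.
move=> P4P mA mB AB0.
have := P4P (fun _ => A) B (fun _ => mA) mB (L1_conv_cst mA mB AB0).
by rewrite (cvg_limn_einf_sup (cvg_cst (P A))).1.
Qed.

Lemma measure_setI_near (Om : nat -> set T) Omega A (dl : R) :
  (forall k, measurable (Om k)) -> measurable Omega -> measurable A ->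
  L1_conv mu Om Omega -> subset_ae mu A Omega -> (0 < dl)%R ->
  \forall k \near \oo, mu A <= mu (A `&` Om k) + dl%:E.
Proof.
move=> mOm mO mA OmL AO dl0; have dlE : 0 < dl%:E by rewrite lte_fin.
apply: filterS (cvge_lt ((L1_convE mu mOm mO).1 OmL) dlE) => k /ltW Omdl.
apply: le_trans (le_measure_setU mu mA (measurableI _ _ mA (mOm k))
  (measurableD mA (mOm k)) _) _.
  by move=> x Ax; have [|] := pselect (Om k x); [left|right].
apply: leeD2l; apply: le_trans (measure_setD_triangle mu mA mA mO (mOm k)) _.
by rewrite setYK measure0 add0e AO add0e setYC.
Qed.

Lemma perimeter_setI_near (Om : nat -> set T) Omega A (dl : R) :
  P3 P -> P4 mu P -> (forall k, measurable (Om k)) -> measurable Omega ->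
  measurable A -> L1_conv mu Om Omega -> (fun k => P (Om k)) @ \oo --> P Omega ->
  P Omega < +oo -> subset_ae mu A Omega -> P A < +oo -> (0 < dl)%R ->
  \forall k \near \oo, P (A `&` Om k) <= P A + dl%:E.
Proof.
move=> P3P P4P mOm mO mA OmL POm POoo AO PAoo dl0.
have PO_fin : P Omega \is a fin_num by rewrite ge0_fin_numE ?P_ge0.
have PA_fin : P A \is a fin_num by rewrite ge0_fin_numE ?P_ge0.
set p := fine (P Omega); have pE : p%:E = P Omega by rewrite fineK.
have PO_le : P Omega <= P (A `|` Omega).
  apply: (P4_le_null_setY P4P (measurableU _ _ mA mO) mO).
  apply: (subset_measure0 _ _ _ AO); [exact: measurableY (measurableU _ _ mA mO) mO
    |exact: measurableD|].
  by move=> x [[[Ax|Ox] nOx]|[Ox nAOx]] //; exfalso; apply: nAOx; right.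
have PU_near : \forall k \near \oo, (p - dl / 2)%:E < P (A `|` Om k).
  apply: lt_limn_einf; apply: lt_le_trans (P4P _ _ _ (measurableU _ _ mA mO)
    (L1_conv_setUl mA mOm mO OmL)); last by move=> k; exact: measurableU.
  by apply: lt_le_trans PO_le; rewrite -pE lte_fin; lra.
have POm_near : \forall k \near \oo, P (Om k) < (p + dl / 2)%:E.
  by apply: cvge_lt POm _; rewrite -pE lte_fin; lra.
apply: filterS2 PU_near POm_near => k PUk POmk.
rewrite -(@leeD2rE _ (p - dl / 2)%:E) //.
apply: le_trans (leeD2l _ (ltW PUk)) _; apply: le_trans (P3P _ _ mA (mOm k)) _.
apply: le_trans (leeD2l _ (ltW POmk)) _; rewrite -addeA -EFinD leeD2l // lee_fin.
lra.
Qed.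

Lemma cluster_in_setI N (E : 'I_N -> set T) Omega A : measurable A ->
  cluster_in mu P E Omega -> (forall i, 0 < mu (E i `&` A)) ->
  (forall i, P (E i `&` A) < +oo) -> cluster_in mu P (fun i => E i `&` A) A.
Proof.
move=> mA [cE _] EA_gt0 EA_fin.
have mE i : measurable (E i) by have [] := cluster_fine P_ge0 i cE.
split; first split.
- move=> i; split; first exact: measurableI.
  split=> //; split=> //; apply: le_lt_trans (cE.1 i).2.2.1.
  exact: measureIl.
- move=> i j ij; apply: subset_measure0 (cE.2 i j ij).
  + by apply: measurableI; exact: measurableI.
  + exact: measurableI.
  + by move=> x [[Ex _] [Ex' _]].
- move=> i; rewrite /subset_ae.
  by have -> : (E i `&` A) `\` A = set0 by apply/seteqP; split=> x // [[_ ?] ?].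
Qed.

Lemma cheeger_near_le_cost M (Om : nat -> set T) Omega (E : 'I_M -> set T) (eta : R) :
  P3 P -> P4 mu P -> (forall k, measurable (Om k)) -> measurable Omega ->
  L1_conv mu Om Omega -> (fun k => P (Om k)) @ \oo --> P Omega -> P Omega < +oo ->
  cluster_in mu P E Omega -> (0 < eta)%R ->
  \forall k \near \oo, cheeger mu P M (Om k) <= (cluster_cost mu P E + eta)%:E.
Proof.
move=> P3P P4P mOm mO OmL POm POoo EO eta0.
have /boolp.choice[dl dlP] : forall i, exists dl : R, [/\ (0 < dl)%R,
    (dl < fine (mu (E i)))%R & forall p' m', (p' <= fine (P (E i)) + dl)%R ->
    (fine (mu (E i)) - dl <= m')%R ->
    (p' / m' <= perimeter_ratio mu P (E i) + eta / M%:R)%R].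
  move=> i; have [_ _ mu_gt0 _ P_ge0'] := cluster_fine P_ge0 i EO.1.
  apply: divr_upper_approx => //; rewrite divr_gt0 // ltr0n.
  exact: leq_ltn_trans (leq0n i) (ltn_ord i).
have near_i i : \forall k \near \oo,
    P (E i `&` Om k) <= P (E i) + (dl i)%:E /\ mu (E i) <= mu (E i `&` Om k) + (dl i)%:E.
  have [mE _ _ _ _] := cluster_fine P_ge0 i EO.1; have [dl0 _ _] := dlP i.
  have PE_fin : P (E i) < +oo by have [[/(_ i)[_ [_ []]]]] := EO.
  exact: filterI (perimeter_setI_near P3P P4P mOm mO mE OmL POm POoo (EO.2 i) PE_fin dl0)
    (measure_setI_near mOm mO mE OmL (EO.2 i) dl0).
apply: filterS (filter_forall _ near_i) => k near_k.
have [G_P G_mu] : (forall i, P (E i `&` Om k) <= (fine (P (E i)) + dl i)%:E) /\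
    (forall i, (fine (mu (E i)) - dl i)%:E <= mu (E i `&` Om k)).
  split=> i; have [_ muE _ PE _] := cluster_fine P_ge0 i EO.1; have [PG muG] := near_k i.
    by rewrite EFinD PE.
  by rewrite EFinB leeBlDr // muE.
have cG : cluster_in mu P (fun i => E i `&` Om k) (Om k).
  apply: cluster_in_setI (mOm k) EO _ _ => i.
    by apply: lt_le_trans (G_mu i); have [_ ? _] := dlP i; rewrite lte_fin subr_gt0.
  exact: le_lt_trans (G_P i) (ltry _).
apply: le_trans (cheeger_le_cost cG) _; rewrite lee_fin.
apply: cluster_cost_le_add (ltW eta0) _ => i; have [_ _ approx] := dlP i.
have [_ muG _ PG _] := cluster_fine P_ge0 i cG.1.
by apply: approx; rewrite -lee_fin ?muG ?PG.
Qed.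

Lemma cheeger_limn_esup_le M (Om : nat -> set T) Omega :
  P3 P -> P4 mu P -> (forall k, measurable (Om k)) -> measurable Omega ->
  L1_conv mu Om Omega -> (fun k => P (Om k)) @ \oo --> P Omega -> P Omega < +oo ->
  limn_esup (fun k => cheeger mu P M (Om k)) <= cheeger mu P M Omega.
Proof.
move=> P3P P4P mOm mO OmL POm POoo; apply: le_ereal_inf_tmp => _ [E EO <-].
apply/lee_addgt0Pr => eta eta0; rewrite -EFinD; apply: limn_esup_le.
exact: cheeger_near_le_cost P3P P4P mOm mO OmL POm POoo EO eta0.
Qed.

End upper_semicontinuity.

Unset Implicit Arguments. Set Strict Implicit.

Theorem proposition3p9 (d : measure_display) (T : measurableType d) (R : realType)
  (mu : {measure set T -> \bar R}) (P : set T -> \bar R)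
  (hsf : sigma_finite setT mu) (hP : proper_functional P)
  (N : nat) (Om : nat -> set T)
  (hOm : forall k, measurable (Om k))
  (hadm : forall k, admissible mu P N (Om k))
  (M : nat) (hM0 : (0 < M)%N) (hMN : (M <= N)%N) :
  (* (i) *)
  (forall k l, subset_ae mu (Om k) (Om l) ->
     (cheeger mu P M (Om l) <= cheeger mu P M (Om k))%E) /\
  (* (ii) *)
  (P6 mu P -> (fun k => mu (Om k)) @ \oo --> 0%E ->
     (fun k => cheeger mu P M (Om k)) @ \oo --> +oo%E) /\
  (* (iii) *)
  (forall Omega : set T, P4 mu P -> P5 mu P -> P6 mu P ->
     measurable Omega -> (0 < mu Omega)%E -> (mu Omega < +oo)%E ->
     L1_conv mu Om Omega ->
     (cheeger mu P M Omega <= limn_einf (fun k => cheeger mu P M (Om k)))%E /\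
     (P3 P -> (P Omega < +oo)%E -> (fun k => P (Om k)) @ \oo --> P Omega ->
        (fun k => cheeger mu P M (Om k)) @ \oo --> cheeger mu P M Omega)).
Proof.
have P_ge0 := hP.1.
split; [|split].
- by move=> k l; apply: (cheeger_subset_ae P_ge0 M (hOm k) (hOm l)).
- by move=> P6P; apply: (cheeger_cvgy P_ge0 hM0 hOm P6P).
move=> Omega P4P P5P P6P mO _ Ooo OmL.
have lsc := cheeger_lsc P_ge0 M P4P P5P P6P hOm mO Ooo OmL.
split=> // P3P POoo POm.
exact: cvg_limn_einf_esup (cheeger_limn_esup_le P_ge0 M P3P P4P hOm mO OmL POm POoo) lsc.
Qed.
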